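(* Let $k\in\mathbb{Z}\setminus\{0\}$ and $0<x_0<1$. The complete spectrum of the eigenvalue problem $$L_k\Psi=\Phi,\qquad L_k\Phi=\mu\,\Phi,\qquad -x_0\le x\le x_0,$$ (i.e. the case $\epsilon=0$) for $\Psi$ in the space $X_0$ consists of isolated eigenvalues $\mu$ which are (i) real and strictly negative, and (ii) either simple or double, a double eigenvalue having two linearly independent eigenfunctions.
   Context: $L_k=\frac{d}{dx}\left[(1-x^2)\frac{d}{dx}\right]-\frac{k^2}{1-x^2}$. ${\cal H}_k([-x_0,x_0])$ is the space of functions with finite norm $\int_{-x_0}^{x_0}\left[(1-x^2)|\Psi'(x)|^2+\frac{k^2}{1-x^2}|\Psi(x)|^2\right]dx$ and $X_0=\{\Psi\in{\cal H}_k([-x_0,x_0]):\ \Psi(\pm x_0)=\Psi'(\pm x_0)=0\}$. A number $\mu\in\mathbb{C}$ is an eigenvalue if there is a nonzero $\Psi\in X_0$ solving the system classically on $[-x_0,x_0]$ with $\Phi=L_k\Psi$. *)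

From Stdlib Require Import Reals ZArith.
From Coquelicot Require Import Coquelicot.
Open Scope R_scope.

Definition Iv (x0 : R) (x : R) : Prop := - x0 <= x <= x0.

Definition deriv_on (x0 : R) (f f' : R -> C) : Prop :=
  forall x, Iv x0 x ->
    @filterdiff R_AbsRing R_NormedModule C_R_NormedModule f
      (within (Iv x0) (locally x)) (fun h : R => scal h (f' x)).

Definition Lk_eq (k : Z) (x0 : R) (F G : R -> C) : Prop :=
  exists F' W : R -> C,
    deriv_on x0 F F' /\
    deriv_on x0 (fun x => (RtoC (1 - x ^ 2) * F' x)%C) W /\
    forall x, Iv x0 x ->
      G x = (W x - RtoC (IZR k ^ 2 / (1 - x ^ 2)) * F x)%C.

(* Psi lies in H_k([-x0,x0]) (finite weighted H^1 norm) and in X_0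
   (Psi(+-x0) = Psi'(+-x0) = 0), and solves L_k Psi = Phi, L_k Phi = mu Phi
   classically on [-x0,x0] for some Phi. The zero function is allowed here,
   so that this describes the eigenspace (on [-x0,x0]). *)
Definition in_eigenspace (k : Z) (x0 : R) (mu : C) (Psi : R -> C) : Prop :=
  exists Psi' Phi : R -> C,
    deriv_on x0 Psi Psi' /\
    ex_RInt (fun x => (1 - x ^ 2) * (Cmod (Psi' x)) ^ 2
                       + IZR k ^ 2 / (1 - x ^ 2) * (Cmod (Psi x)) ^ 2)
            (- x0) x0 /\
    Psi (- x0) = 0%C /\ Psi x0 = 0%C /\
    Psi' (- x0) = 0%C /\ Psi' x0 = 0%C /\
    Lk_eq k x0 Psi Phi /\
    Lk_eq k x0 Phi (fun x => (mu * Phi x)%C).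

Definition is_eigenvalue (k : Z) (x0 : R) (mu : C) : Prop :=
  exists Psi : R -> C,
    in_eigenspace k x0 mu Psi /\ exists x, Iv x0 x /\ Psi x <> 0%C.

From Stdlib Require Import Reals ZArith Lra Lia Psatz Classical ClassicalEpsilon.
From Coquelicot Require Import Coquelicot.
Open Scope R_scope.

(* Writing Psi = u + i v, Phi = P + i Q and mu = a + i b splits the system into real
   equations for L_k.  By Green's formula <L_k f, g> = - B(f, g) when g vanishes at both
   ends, where B(f, g) = int (1 - x^2) f' g' + k^2 / (1 - x^2) f g is positive; so L_k is
   symmetric on functions with f = f' = 0 at both ends.  Pairing L_k Phi = mu Phi with Psi
   gives b (B(u,u) + B(v,v)) = 0 and -a (B(u,u) + B(v,v)) = |P|^2 + |Q|^2, so mu is real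
   and negative.
   For real mu the system is first order in (Psi, (1 - x^2) Psi', Phi, (1 - x^2) Phi') with
   coefficients bounded on [-x0, x0].  Since Psi and Psi' vanish at x0, a combination of three
   eigenfunctions for which Phi and Phi' also vanish at x0 is zero by Gronwall's lemma.
   Eigenfunctions of distinct eigenvalues are B-orthogonal, and u(s)^2 <= C B(u,u) when
   u(-x0) = 0.  A Bessel-type argument then bounds by a multiple of R the number of
   eigenvalues with Re mu >= -R, so eigenvalues cannot accumulate. *)

(** * Functions on [-x0, x0] *)

Definition clamp (x0 x : R) : R := Rmax (- x0) (Rmin x x0).

(* Functions are only meaningful on [-x0, x0]; precomposing them with the clamp
   makes them continuous on all of R, so that continuity_pt and RInt apply. *)
Definition extend (x0 : R) (f : R -> R) (x : R) : R := f (clamp x0 x).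

Definition derive_within (x0 : R) (f f' : R -> R) : Prop :=
  forall x, Iv x0 x -> forall eps, 0 < eps ->
  exists d, 0 < d /\ forall y, Iv x0 y -> Rabs (y - x) < d ->
    Rabs (f y - f x - f' x * (y - x)) <= eps * Rabs (y - x).

Section Interval.

Variable x0 : R.

Lemma clamp_id x : Iv x0 x -> clamp x0 x = x.
Proof. unfold clamp, Iv, Rmax, Rmin; intros; repeat destruct Rle_dec; lra. Qed.

Lemma extend_id f x : Iv x0 x -> extend x0 f x = f x.
Proof. intros Hx; unfold extend; now rewrite clamp_id. Qed.

Lemma locally_clamp_id x : - x0 < x < x0 -> locally x (fun y => clamp x0 y = y).
Proof.
  intros Hx. assert (Hm : 0 < Rmin (x + x0) (x0 - x)) by (apply Rmin_glb_lt; lra).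
  exists (mkposreal _ Hm); intros y Hy.
  change (Rabs (y - x) < Rmin (x + x0) (x0 - x)) in Hy.
  apply clamp_id; unfold Iv; revert Hy.
  unfold Rmin, Rabs; repeat destruct Rle_dec; repeat destruct Rcase_abs; lra.
Qed.

Lemma is_derive_extend f x l :
  - x0 < x < x0 -> is_derive f x l -> is_derive (extend x0 f) x l.
Proof.
  intros Hx Hd; apply is_derive_ext_loc with f; auto.
  generalize (locally_clamp_id x Hx); apply filter_imp.
  intros y Hy; unfold extend; now rewrite Hy.
Qed.

Lemma derive_within_is_derive f f' x :
  - x0 < x < x0 -> derive_within x0 f f' -> is_derive f x (f' x).
Proof.
  intros Hx Hf; apply is_derive_Reals; intros eps Heps.
  destruct (Hf x ltac:(unfold Iv; lra) (eps / 2) ltac:(lra)) as [d [Hd Hfd]].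
  assert (Hm : 0 < Rmin d (Rmin (x + x0) (x0 - x))) by (repeat apply Rmin_glb_lt; lra).
  exists (mkposreal _ Hm); intros h Hh0 Hh; simpl in Hh.
  assert (Hy : Iv x0 (x + h)).
  { unfold Iv; revert Hh.
    unfold Rmin, Rabs; repeat destruct Rle_dec; repeat destruct Rcase_abs; lra. }
  assert (Hhd : Rabs (x + h - x) < d).
  { replace (x + h - x) with h by ring; eapply Rlt_le_trans; [exact Hh | apply Rmin_l]. }
  specialize (Hfd (x + h) Hy Hhd); replace (x + h - x) with h in Hfd by ring.
  replace ((f (x + h) - f x) / h - f' x) with ((f (x + h) - f x - f' x * h) / h) by (field; auto).
  assert (Hpos : Rabs h > 0) by (apply Rabs_pos_lt; auto).
  rewrite Rabs_div by auto.
  apply Rle_lt_trans with (eps / 2); [|lra].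
  apply Rmult_le_reg_r with (Rabs h); auto.
  unfold Rdiv; rewrite Rmult_assoc, Rinv_l by lra; lra.
Qed.

Lemma derive_within_ext f f' g g' :
  (forall x, Iv x0 x -> f x = g x) -> (forall x, Iv x0 x -> f' x = g' x) ->
  derive_within x0 f f' -> derive_within x0 g g'.
Proof.
  intros Ef Ef' Hf x Hx eps Heps; destruct (Hf x Hx eps Heps) as [d [Hd Hfd]].
  exists d; split; auto; intros y Hy Hyx; rewrite <- !Ef, <- Ef'; auto.
Qed.

Hypothesis x0_ge0 : 0 <= x0.

Lemma Iv_clamp x : Iv x0 (clamp x0 x).
Proof. unfold clamp, Iv, Rmax, Rmin; repeat destruct Rle_dec; lra. Qed.

Lemma clamp_lipschitz x y : Rabs (clamp x0 y - clamp x0 x) <= Rabs (y - x).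
Proof. unfold clamp, Rmax, Rmin, Rabs; repeat destruct Rle_dec; repeat destruct Rcase_abs; lra. Qed.

Lemma continuity_pt_clamp x : continuity_pt (clamp x0) x.
Proof.
  intros eps Heps; exists eps; split; auto; intros y [_ Hy].
  eapply Rle_lt_trans; [apply clamp_lipschitz | exact Hy].
Qed.

Lemma extend_ext f g : (forall x, Iv x0 x -> f x = g x) -> forall x, extend x0 f x = extend x0 g x.
Proof. intros E x; apply E, Iv_clamp. Qed.

Lemma continuity_pt_extend_derive_within f f' x :
  derive_within x0 f f' -> continuity_pt (extend x0 f) x.
Proof.
  intros Hf eps Heps; simpl; unfold R_dist.
  set (c := clamp x0 x).
  destruct (Hf c (Iv_clamp x) 1 Rlt_0_1) as [d [Hd Hfd]].
  set (M := 1 + Rabs (f' c)).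
  assert (HM : 0 < M) by (unfold M; pose proof (Rabs_pos (f' c)); lra).
  exists (Rmin d (eps / M)); split.
  { apply Rmin_glb_lt; auto; apply Rdiv_lt_0_compat; auto. }
  intros y [_ Hyx]; unfold extend; fold c.
  assert (Hyc : Rabs (clamp x0 y - c) < Rmin d (eps / M))
    by (eapply Rle_lt_trans; [apply clamp_lipschitz | exact Hyx]).
  specialize (Hfd _ (Iv_clamp y) (Rlt_le_trans _ _ _ Hyc (Rmin_l _ _))).
  assert (Hyc' : M * Rabs (clamp x0 y - c) < M * (eps / M))
    by (apply Rmult_lt_compat_l; auto; eapply Rlt_le_trans; [exact Hyc | apply Rmin_r]).
  replace (M * (eps / M)) with eps in Hyc' by (field; lra).
  pose proof (Rabs_triang (f (clamp x0 y) - f c - f' c * (clamp x0 y - c)) (f' c * (clamp x0 y - c)))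
    as Htri.
  replace (f (clamp x0 y) - f c - f' c * (clamp x0 y - c) + f' c * (clamp x0 y - c))
    with (f (clamp x0 y) - f c) in Htri by ring.
  rewrite Rabs_mult in Htri; unfold M in Hyc'; lra.
Qed.

End Interval.

Lemma derive_within_unique x0 f f1 f2 x :
  0 < x0 -> derive_within x0 f f1 -> derive_within x0 f f2 -> Iv x0 x -> f1 x = f2 x.
Proof.
  intros H0 H1 H2 Hx; destruct (Req_dec (f1 x) (f2 x)) as [|Hne]; auto; exfalso.
  set (dl := Rabs (f1 x - f2 x)).
  assert (Hdl : 0 < dl) by (apply Rabs_pos_lt; lra).
  destruct (H1 x Hx (dl / 4) ltac:(lra)) as [d1 [Hd1 Hfd1]].
  destruct (H2 x Hx (dl / 4) ltac:(lra)) as [d2 [Hd2 Hfd2]].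
  set (t := Rmin (Rmin d1 d2) x0 / 2).
  assert (Ht : 0 < t < d1 /\ t < d2 /\ t <= x0)
    by (unfold t, Rmin; repeat destruct Rle_dec; lra).
  set (y := if Rle_dec x 0 then x + t else x - t).
  assert (Hy : Iv x0 y) by (unfold y, Iv in *; destruct Rle_dec; lra).
  assert (Hyx : Rabs (y - x) = t).
  { unfold y; destruct Rle_dec;
      [replace (x + t - x) with t by ring | replace (x - t - x) with (- t) by ring; rewrite Rabs_Ropp];
      apply Rabs_right; lra. }
  specialize (Hfd1 y Hy ltac:(lra)); specialize (Hfd2 y Hy ltac:(lra)); rewrite Hyx in *.
  pose proof (Rabs_triang (f y - f x - f2 x * (y - x)) (- (f y - f x - f1 x * (y - x)))) as Htri.
  rewrite Rabs_Ropp in Htri.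
  replace (f y - f x - f2 x * (y - x) + - (f y - f x - f1 x * (y - x)))
    with ((f1 x - f2 x) * (y - x)) in Htri by ring.
  rewrite Rabs_mult, Hyx in Htri; fold dl in Htri; nra.
Qed.

Lemma deriv_on_Re_Im x0 f f' : deriv_on x0 f f' ->
  derive_within x0 (fun x => Re (f x)) (fun x => Re (f' x)) /\
  derive_within x0 (fun x => Im (f x)) (fun x => Im (f' x)).
Proof.
  intros Hf.
  assert (Hlin : forall (a b c : C) (t : R),
    Re (@minus C_R_NormedModule (@minus C_R_NormedModule a b) (@scal _ C_R_NormedModule t c))
      = Re a - Re b - Re c * t /\
    Im (@minus C_R_NormedModule (@minus C_R_NormedModule a b) (@scal _ C_R_NormedModule t c))
      = Im a - Im b - Im c * t)
    by (intros [] [] [] t; split; compute -[Rmult Rplus Ropp Rminus]; ring).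
  assert (Hbound : forall x, Iv x0 x -> forall eps, 0 < eps -> exists d, 0 < d /\
    forall y, Iv x0 y -> Rabs (y - x) < d ->
      Cmod (@minus C_R_NormedModule (@minus C_R_NormedModule (f y) (f x))
              (@scal _ C_R_NormedModule (y - x) (f' x))) <= eps * Rabs (y - x)).
  { intros x Hx eps Heps; destruct (Hf x Hx) as [_ Hd].
    assert (Hl : is_filter_lim (within (Iv x0) (locally x)) x)
      by (intros P [d Hd']; exists d; intros y Hy _; apply Hd'; auto).
    destruct (Hd x Hl (mkposreal eps Heps)) as [d Hd'].
    exists d; split; [apply cond_pos |]; intros y Hy Hyx.
    specialize (Hd' y Hyx Hy); simpl in Hd'; rewrite <- Cmod_norm in Hd'; exact Hd'. }
  split; intros x Hx eps Heps; destruct (Hbound x Hx eps Heps) as [d [Hd Hfd]];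
    exists d; split; auto; intros y Hy Hyx; specialize (Hfd y Hy Hyx).
  - destruct (Hlin (f y) (f x) (f' x) (y - x)) as [<- _].
    eapply Rle_trans; [apply re_le_Cmod | exact Hfd].
  - destruct (Hlin (f y) (f x) (f' x) (y - x)) as [_ <-].
    eapply Rle_trans; [| exact Hfd].
    eapply Rle_trans; [| apply Rmax_Cmod]; apply Rmax_r.
Qed.

Lemma continuity_pt_cst (c x : R) : continuity_pt (fun _ => c) x.
Proof. apply continuity_pt_const; intros ? ?; reflexivity. Qed.

(** * Calculus on the real line *)

Ltac solve_continuity :=
  repeat first [ solve [auto] | apply continuity_pt_plus | apply continuity_pt_minus
               | apply continuity_pt_mult | apply continuity_pt_scal | apply continuity_pt_cst ].

Lemma ex_RInt_continuity (h : R -> R) a b : (forall x, continuity_pt h x) -> ex_RInt h a b.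
Proof.
  intros Hh; apply (@ex_RInt_continuous R_CompleteNormedModule).
  intros z _; apply continuity_pt_filterlim, Hh.
Qed.

Lemma RInt_plusR (f g : R -> R) a b : ex_RInt f a b -> ex_RInt g a b ->
  RInt (fun x => f x + g x) a b = RInt f a b + RInt g a b.
Proof. exact (@RInt_plus R_CompleteNormedModule f g a b). Qed.

Lemma RInt_minusR (f g : R -> R) a b : ex_RInt f a b -> ex_RInt g a b ->
  RInt (fun x => f x - g x) a b = RInt f a b - RInt g a b.
Proof. exact (@RInt_minus R_CompleteNormedModule f g a b). Qed.

Lemma RInt_scalR (f : R -> R) a b l : ex_RInt f a b -> RInt (fun x => l * f x) a b = l * RInt f a b.
Proof. exact (@RInt_scal R_CompleteNormedModule f a b l). Qed.

Lemma RInt_constR a b c : RInt (fun _ => c) a b = c * (b - a).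
Proof. rewrite (@RInt_const R_CompleteNormedModule); apply Rmult_comm. Qed.

Lemma RInt_extR (f g : R -> R) a b :
  (forall x, Rmin a b < x < Rmax a b -> f x = g x) -> RInt f a b = RInt g a b.
Proof. exact (@RInt_ext R_CompleteNormedModule f g a b). Qed.

Lemma RInt_ChaslesR (f : R -> R) a b c : ex_RInt f a b -> ex_RInt f b c ->
  RInt f a b + RInt f b c = RInt f a c.
Proof. exact (@RInt_Chasles R_CompleteNormedModule f a b c). Qed.

Lemma RInt_pointR (f : R -> R) a : RInt f a a = 0.
Proof. rewrite RInt_point; reflexivity. Qed.

Lemma is_derive_plusR (f g : R -> R) x df dg : is_derive f x df -> is_derive g x dg ->
  is_derive (fun t => f t + g t) x (df + dg).
Proof. exact (is_derive_plus f g x df dg). Qed.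

Lemma is_derive_sqr (f : R -> R) x l : is_derive f x l -> is_derive (fun t => f t ^ 2) x (2 * f x * l).
Proof.
  intros Hf; replace (2 * f x * l) with (l * f x + f x * l) by ring.
  eapply is_derive_ext; [| apply (Derive.is_derive_mult f f x l l Hf Hf)]; intros; simpl; ring.
Qed.

Lemma is_derive_lin (f g : R -> R) x df dg al be : is_derive f x df -> is_derive g x dg ->
  is_derive (fun t => al * f t + be * g t) x (al * df + be * dg).
Proof. intros Hf Hg; apply is_derive_plusR; apply is_derive_scal; auto. Qed.

Lemma is_derive_RInt_upper (h : R -> R) a t : (forall x, continuity_pt h x) ->
  is_derive (fun t => RInt h a t) t (h t).
Proof.
  intros Hh; apply (is_derive_RInt h (fun t => RInt h a t) a t).
  - apply filter_forall; intros; apply (@RInt_correct R_CompleteNormedModule), ex_RInt_continuity, Hh.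
  - apply continuity_pt_filterlim, Hh.
Qed.

(* Unlike [is_RInt_derive], no derivative is required at the endpoints, where extended
   functions usually have none. *)
Lemma RInt_derive_interior (H h : R -> R) a b : a <= b ->
  (forall x, continuity_pt H x) -> (forall x, continuity_pt h x) ->
  (forall x, a < x < b -> is_derive H x (h x)) -> RInt h a b = H b - H a.
Proof.
  intros Hab HH Hh Hd.
  destruct (MVT_gen (fun t => RInt h a t - H t) a b (fun t => h t - h t)) as [c [_ Hc]].
  - intros x Hx; rewrite Rmin_left, Rmax_right in Hx by lra.
    apply (is_derive_minus _ _ _ _ _ (is_derive_RInt_upper h a x Hh) (Hd x Hx)).
  - intros x _; apply continuity_pt_minus; auto.
    apply continuity_pt_filterlim, (ex_derive_continuous (fun t => RInt h a t)).
    eexists; apply is_derive_RInt_upper, Hh.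
  - rewrite RInt_pointR in Hc; lra.
Qed.

Lemma nondecreasing_derive_ge0 (G dG : R -> R) a b : a <= b ->
  (forall x, continuity_pt G x) -> (forall x, a < x < b -> is_derive G x (dG x)) ->
  (forall x, a <= x <= b -> 0 <= dG x) -> G a <= G b.
Proof.
  intros Hab HG Hd Hp.
  destruct (MVT_gen G a b dG) as [c [Hc Hmvt]].
  - intros x Hx; rewrite Rmin_left, Rmax_right in Hx by lra; auto.
  - intros; auto.
  - rewrite Rmin_left, Rmax_right in Hc by lra; specialize (Hp c Hc); nra.
Qed.

Lemma RInt_gt_0_pt (g : R -> R) a b x1 : a < b -> a <= x1 <= b ->
  (forall x, continuity_pt g x) -> (forall x, 0 <= g x) -> 0 < g x1 -> 0 < RInt g a b.
Proof.
  intros Hab Hx1 Hc Hp Hg1.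
  destruct (Hc x1 (g x1 / 2) ltac:(lra)) as [d [Hd Hgd]]; simpl in Hgd; unfold R_dist in Hgd.
  set (c := Rmax a (x1 - d / 2)); set (e := Rmin b (x1 + d / 2)).
  assert (Hce : a <= c < e /\ e <= b /\ x1 - d < c /\ e < x1 + d)
    by (unfold c, e, Rmax, Rmin; repeat destruct Rle_dec; lra).
  assert (Hex : forall u v, ex_RInt g u v) by (intros; apply ex_RInt_continuity; auto).
  rewrite <- (RInt_ChaslesR g a c b), <- (RInt_ChaslesR g c e b) by auto.
  assert (0 <= RInt g a c) by (apply RInt_ge_0; auto; lra).
  assert (0 <= RInt g e b) by (apply RInt_ge_0; auto; lra).
  assert (0 < RInt g c e); [| lra].
  apply RInt_gt_0; try lra.
  - intros x Hx; destruct (Req_dec x x1) as [-> | Hne]; [lra |].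
    assert (Hclose : Rabs (g x - g x1) < g x1 / 2).
    { apply Hgd; split; [split; [exact I | auto] |].
      unfold Rabs; destruct (Rcase_abs (x - x1)); lra. }
    revert Hclose; unfold Rabs; destruct (Rcase_abs (g x - g x1)); lra.
  - intros; apply continuity_pt_filterlim; auto.
Qed.

Lemma RInt_eq_0_nonneg (g : R -> R) a b x1 : a < b -> a <= x1 <= b ->
  (forall x, continuity_pt g x) -> (forall x, 0 <= g x) -> RInt g a b = 0 -> g x1 = 0.
Proof.
  intros Hab Hx1 Hc Hp HI; destruct (Rle_lt_or_eq_dec _ _ (Hp x1)) as [Hlt | <-]; auto.
  pose proof (RInt_gt_0_pt g a b x1 Hab Hx1 Hc Hp Hlt); lra.
Qed.

Lemma continuity_pt_sqr (f : R -> R) x : continuity_pt f x -> continuity_pt (fun t => f t ^ 2) x.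
Proof. intros H; repeat apply continuity_pt_mult; auto; apply continuity_pt_cst. Qed.

Lemma RInt_sqr_le (f : R -> R) a b : a <= b -> (forall x, continuity_pt f x) ->
  (RInt f a b) ^ 2 <= (b - a) * RInt (fun x => f x ^ 2) a b.
Proof.
  intros Hab Hc; destruct (Rle_lt_or_eq_dec _ _ Hab) as [Hlt | <-].
  2: rewrite !RInt_pointR; lra.
  (* expand 0 <= RInt ((f - m)^2) at the mean value m *)
  set (m := RInt f a b / (b - a)).
  assert (Hex : forall h, (forall x, continuity_pt h x) -> ex_RInt h a b)
    by (intros; apply ex_RInt_continuity; auto).
  assert (H0 : 0 <= RInt (fun x => f x ^ 2 - 2 * m * f x + m ^ 2) a b).
  { apply RInt_ge_0; [lra | |].
    - apply Hex; intros; apply continuity_pt_plus; [apply continuity_pt_minus|];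
        [apply continuity_pt_sqr | apply continuity_pt_scal | apply continuity_pt_cst]; auto.
    - intros x _; replace (f x ^ 2 - 2 * m * f x + m ^ 2) with ((f x - m) ^ 2) by ring.
      apply pow2_ge_0. }
  rewrite RInt_plusR, RInt_minusR, RInt_scalR, RInt_constR in H0;
    try (apply Hex; intros; repeat first [apply continuity_pt_minus | apply continuity_pt_scal
      | apply continuity_pt_sqr | apply continuity_pt_cst]; auto).
  unfold m in H0.
  replace (RInt (fun x => f x ^ 2) a b - 2 * (RInt f a b / (b - a)) * RInt f a b
           + (RInt f a b / (b - a)) ^ 2 * (b - a))
    with (RInt (fun x => f x ^ 2) a b - RInt f a b ^ 2 / (b - a)) in H0 by (field; lra).
  assert (RInt f a b ^ 2 / (b - a) * (b - a) = RInt f a b ^ 2) by (field; lra).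
  nra.
Qed.

(* Gronwall: (g e^{K t})' >= 0, so g e^{K t} vanishes on [a, b] together with its value at b. *)
Lemma gronwall_vanish (g dg : R -> R) K a b x : a <= x <= b ->
  (forall t, continuity_pt g t) -> (forall t, a < t < b -> is_derive g t (dg t)) ->
  (forall t, a <= t <= b -> - K * g t <= dg t) -> 0 <= g x -> g b = 0 -> g x = 0.
Proof.
  intros Hx Hc Hd Hdg Hgx Hgb.
  assert (Hmono : g x * exp (K * x) <= g b * exp (K * b)).
  { apply (nondecreasing_derive_ge0 (fun t => g t * exp (K * t))
      (fun t => (dg t + K * g t) * exp (K * t)) x b); [lra | | |].
    - intros t; apply continuity_pt_mult; auto; apply derivable_continuous_pt; reg.
    - intros t Ht.
      replace ((dg t + K * g t) * exp (K * t)) with (dg t * exp (K * t) + g t * (K * exp (K * t))) by ring.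
      apply (Derive.is_derive_mult g (fun s => exp (K * s))); [apply Hd; lra |].
      auto_derive; auto; ring.
    - intros t Ht; specialize (Hdg t ltac:(lra)).
      apply Rmult_le_pos; [lra | left; apply exp_pos]. }
  rewrite Hgb, Rmult_0_l in Hmono; pose proof (exp_pos (K * x)); nra.
Qed.

Lemma two_mul_ge s y z M : Rabs s <= M -> - M * (y ^ 2 + z ^ 2) <= 2 * s * y * z.
Proof.
  intros Hs; assert (0 <= (y - z) ^ 2) by apply pow2_ge_0; assert (0 <= (y + z) ^ 2) by apply pow2_ge_0.
  revert Hs; unfold Rabs; destruct Rcase_abs; intros; nra.
Qed.

Lemma sum_f_R0_single (f : nat -> R) n j : (j <= n)%nat ->
  (forall l, (l <= n)%nat -> l <> j -> f l = 0) -> sum_f_R0 f n = f j.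
Proof.
  induction n as [| n IH]; intros Hj Hf; simpl.
  - now replace j with 0%nat by lia.
  - destruct (Nat.eq_dec j (S n)) as [-> | Hne].
    + rewrite (sum_eq _ (fun _ => 0)), sum_cte by (intros; apply Hf; lia); ring.
    + rewrite IH, (Hf (S n)) by (lia || (intros; apply Hf; lia)); ring.
Qed.

Lemma continuity_pt_sum n (h : nat -> R -> R) x : (forall j, (j <= n)%nat -> continuity_pt (h j) x) ->
  continuity_pt (fun x => sum_f_R0 (fun j => h j x) n) x.
Proof.
  induction n as [| n IH]; intros Hh; simpl; [apply Hh; lia |].
  apply continuity_pt_plus; [apply IH; intros; apply Hh |apply Hh]; lia.
Qed.

Lemma RInt_sum n (h : nat -> R -> R) a b : (forall j, (j <= n)%nat -> forall x, continuity_pt (h j) x) ->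
  RInt (fun x => sum_f_R0 (fun j => h j x) n) a b = sum_f_R0 (fun j => RInt (h j) a b) n.
Proof.
  induction n as [| n IH]; intros Hh; simpl; [reflexivity |].
  rewrite RInt_plusR, IH; auto; apply ex_RInt_continuity; auto.
  intros; apply continuity_pt_sum; auto.
Qed.

(** * The operator L_k and its form *)

Definition weight (x : R) : R := 1 - x ^ 2.
Definition potential (k2 x : R) : R := k2 / (1 - x ^ 2).

(* The real-valued form of [Lk_eq], with k2 standing for k^2. *)
Record Lk_solution (x0 k2 : R) (u u' F : R -> R) : Prop := {
  Lk_cont : forall x, continuity_pt (extend x0 u) x;
  Lk_cont_flux : forall x, continuity_pt (extend x0 (fun y => weight y * u' y)) x;
  Lk_cont_rhs : forall x, continuity_pt (extend x0 F) x;
  Lk_derive : forall x, - x0 < x < x0 -> is_derive u x (u' x);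
  Lk_derive_flux : forall x, - x0 < x < x0 ->
    is_derive (fun y => weight y * u' y) x (F x + potential k2 x * u x)
}.

Definition inner (x0 : R) (f g : R -> R) : R :=
  RInt (fun x => extend x0 f x * extend x0 g x) (- x0) x0.

Definition Lk_form (x0 k2 : R) (f f' g g' : R -> R) : R :=
  RInt (fun x => extend x0 (fun y => weight y * f' y) x * extend x0 g' x
                 + extend x0 (potential k2) x * extend x0 f x * extend x0 g x) (- x0) x0.

Definition clamped_bc (x0 : R) (u u' : R -> R) : Prop :=
  u x0 = 0 /\ u (- x0) = 0 /\ u' x0 = 0 /\ u' (- x0) = 0.

Record real_eigenpair (x0 k2 a : R) (u u' P P' : R -> R) : Prop := {
  eig_Lu : Lk_solution x0 k2 u u' P;
  eig_LP : Lk_solution x0 k2 P P' (fun x => a * P x);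
  eig_bc : clamped_bc x0 u u'
}.

Section Operator.

Variables x0 k2 : R.
Hypothesis x0_bounds : 0 < x0 < 1.

Lemma weight_clamp_ge x : 0 < 1 - x0 ^ 2 <= weight (clamp x0 x).
Proof.
  pose proof (Iv_clamp x0 ltac:(lra) x) as Hc; unfold Iv in Hc; unfold weight; split; nra.
Qed.

Lemma continuity_pt_extend_potential x : continuity_pt (extend x0 (potential k2)) x.
Proof.
  apply (continuity_pt_comp (clamp x0) (potential k2)).
  - apply continuity_pt_clamp; lra.
  - unfold potential; apply continuity_pt_div; [apply continuity_pt_cst | reg |].
    pose proof (weight_clamp_ge x); unfold weight in *; lra.
Qed.

Lemma continuity_pt_extend_derivative u u' F x :
  Lk_solution x0 k2 u u' F -> continuity_pt (extend x0 u') x.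
Proof.
  intros Hu.
  apply continuity_pt_ext with
    (fun x => extend x0 (fun y => weight y * u' y) x / extend x0 weight x).
  - intros y; unfold extend; pose proof (weight_clamp_ge y); field; lra.
  - apply continuity_pt_div; [apply Hu | |].
    + apply (continuity_pt_comp (clamp x0) weight); [apply continuity_pt_clamp; lra |].
      unfold weight; reg.
    + unfold extend; pose proof (weight_clamp_ge x); lra.
Qed.

Lemma green_identity f f' F g g' G :
  Lk_solution x0 k2 f f' F -> Lk_solution x0 k2 g g' G ->
  inner x0 F g = weight x0 * f' x0 * g x0 - weight (- x0) * f' (- x0) * g (- x0)
                 - Lk_form x0 k2 f f' g g'.
Proof.
  intros Hf Hg.
  pose proof (fun x => continuity_pt_extend_derivative g g' G x Hg) as Cg'.
  pose proof continuity_pt_extend_potential as Cq.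
  destruct Hf as [Cf Cpf CF Df DpF]; destruct Hg as [Cg Cpg CG Dg DpG].
  set (flux := extend x0 (fun y => weight y * f' y)).
  set (h := fun x => extend x0 F x * extend x0 g x
            + (flux x * extend x0 g' x + extend x0 (potential k2) x * extend x0 f x * extend x0 g x)).
  assert (Hint : forall x, continuity_pt h x)
    by (intros x; unfold h, flux; solve_continuity).
  assert (Hibp : RInt h (- x0) x0 = flux x0 * extend x0 g x0 - flux (- x0) * extend x0 g (- x0)).
  { apply (RInt_derive_interior (fun x => flux x * extend x0 g x)); [lra | | auto |].
    - intros x; unfold flux; solve_continuity.
    - intros x Hx.
      replace (h x) with ((F x + potential k2 x * f x) * extend x0 g x + flux x * g' x).
      + apply Derive.is_derive_mult; apply is_derive_extend; auto.
      + unfold h, flux, extend; rewrite (clamp_id x0 x) by (unfold Iv; lra); ring. }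
  unfold h in Hibp; rewrite RInt_plusR in Hibp
    by (apply ex_RInt_continuity; intros; unfold flux; solve_continuity).
  unfold flux, extend in Hibp; rewrite !clamp_id in Hibp by (unfold Iv; lra).
  unfold inner, Lk_form, extend; lra.
Qed.

Lemma green_dirichlet f f' F g g' G :
  Lk_solution x0 k2 f f' F -> Lk_solution x0 k2 g g' G -> g x0 = 0 -> g (- x0) = 0 ->
  inner x0 F g = - Lk_form x0 k2 f f' g g'.
Proof. intros Hf Hg H1 H2; rewrite (green_identity f f' F g g' G), H1, H2 by auto; ring. Qed.

Lemma green_neumann f f' F g g' G :
  Lk_solution x0 k2 f f' F -> Lk_solution x0 k2 g g' G -> f' x0 = 0 -> f' (- x0) = 0 ->
  inner x0 F g = - Lk_form x0 k2 f f' g g'.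
Proof. intros Hf Hg H1 H2; rewrite (green_identity f f' F g g' G), H1, H2 by auto; ring. Qed.

Lemma Lk_solution_ext u u' F v v' G :
  (forall x, Iv x0 x -> u x = v x) -> (forall x, Iv x0 x -> u' x = v' x) ->
  (forall x, Iv x0 x -> F x = G x) -> Lk_solution x0 k2 u u' F -> Lk_solution x0 k2 v v' G.
Proof.
  intros Eu Eu' EF [Cu Cpu CF Du DpU].
  assert (Hiv : forall x, - x0 < x < x0 -> Iv x0 x) by (unfold Iv; intros; lra).
  assert (Hloc : forall (f g : R -> R) x, (forall x, Iv x0 x -> f x = g x) -> - x0 < x < x0 ->
                   locally x (fun t => f t = g t)).
  { intros f g x E Hx; generalize (locally_clamp_id x0 x Hx); apply filter_imp.
    intros y Hy; apply E; rewrite <- Hy; apply Iv_clamp; lra. }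
  constructor.
  - intros x; apply continuity_pt_ext with (extend x0 u); auto; apply extend_ext; auto; lra.
  - intros x; apply continuity_pt_ext with (extend x0 (fun y => weight y * u' y)); auto.
    apply extend_ext; [lra |]; intros; rewrite Eu'; auto.
  - intros x; apply continuity_pt_ext with (extend x0 F); auto; apply extend_ext; auto; lra.
  - intros x Hx; rewrite <- Eu'; auto; apply is_derive_ext_loc with u; auto.
  - intros x Hx; rewrite <- EF, <- Eu; auto.
    apply is_derive_ext_loc with (fun y => weight y * u' y); auto.
    apply Hloc; auto; intros; rewrite Eu'; auto.
Qed.

Lemma Lk_solution_of_derive_within u u' W F :
  derive_within x0 u u' -> derive_within x0 (fun x => weight x * u' x) W ->
  (forall x, Iv x0 x -> F x = W x - potential k2 x * u x) ->
  (forall x, continuity_pt (extend x0 F) x) -> Lk_solution x0 k2 u u' F.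
Proof.
  intros Du Dflux EF CF; constructor; auto.
  - intros; apply (continuity_pt_extend_derive_within x0 ltac:(lra) u u'); auto.
  - intros; apply (continuity_pt_extend_derive_within x0 ltac:(lra) _ W); auto.
  - intros; apply (derive_within_is_derive x0); auto.
  - intros x Hx; rewrite EF by (unfold Iv; lra).
    replace (W x - potential k2 x * u x + potential k2 x * u x) with (W x) by ring.
    apply (derive_within_is_derive x0 _ W); auto.
Qed.

Lemma Lk_solution_lin f f' F g g' G al be :
  Lk_solution x0 k2 f f' F -> Lk_solution x0 k2 g g' G ->
  Lk_solution x0 k2 (fun x => al * f x + be * g x) (fun x => al * f' x + be * g' x)
    (fun x => al * F x + be * G x).
Proof.
  intros [Cf Cpf CF Df DpF] [Cg Cpg CG Dg DpG]; constructor.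
  - intros x; unfold extend; solve_continuity.
  - intros x; apply continuity_pt_ext with
      (fun x => al * extend x0 (fun y => weight y * f' y) x + be * extend x0 (fun y => weight y * g' y) x).
    + intros; unfold extend; ring.
    + solve_continuity.
  - intros x; unfold extend; solve_continuity.
  - intros x Hx; apply is_derive_lin; auto.
  - intros x Hx.
    replace (al * F x + be * G x + potential k2 x * (al * f x + be * g x))
      with (al * (F x + potential k2 x * f x) + be * (G x + potential k2 x * g x)) by ring.
    eapply is_derive_ext; [| apply (is_derive_lin _ _ x _ _ al be (DpF x Hx) (DpG x Hx))].
    intros; simpl; ring.
Qed.

Lemma Lk_solution_sum n (al : nat -> R) (u u' F : nat -> R -> R) :
  (forall j, (j <= n)%nat -> Lk_solution x0 k2 (u j) (u' j) (F j)) ->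
  Lk_solution x0 k2 (fun x => sum_f_R0 (fun j => al j * u j x) n)
    (fun x => sum_f_R0 (fun j => al j * u' j x) n) (fun x => sum_f_R0 (fun j => al j * F j x) n).
Proof.
  induction n as [| n IH]; intros Hu.
  - eapply Lk_solution_ext; [| | | apply (Lk_solution_lin _ _ _ _ _ _ (al 0%nat) 0 (Hu 0%nat (le_n 0))
                                                               (Hu 0%nat (le_n 0)))];
      intros; simpl; ring.
  - eapply Lk_solution_ext; [| | | apply (Lk_solution_lin _ _ _ _ _ _ 1 (al (S n))
                                      (IH (fun j Hj => Hu j ltac:(lia))) (Hu (S n) (le_n _)))];
      intros; simpl; ring.
Qed.

Lemma Lk_form_sym f f' g g' : Lk_form x0 k2 f f' g g' = Lk_form x0 k2 g g' f f'.
Proof. unfold Lk_form; apply RInt_extR; intros x _; unfold extend; ring. Qed.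

Lemma inner_comm f g : inner x0 f g = inner x0 g f.
Proof. unfold inner; apply RInt_extR; intros; ring. Qed.

Lemma inner_lin f g h al be :
  (forall x, continuity_pt (extend x0 f) x) -> (forall x, continuity_pt (extend x0 g) x) ->
  (forall x, continuity_pt (extend x0 h) x) ->
  inner x0 (fun x => al * f x + be * g x) h = al * inner x0 f h + be * inner x0 g h.
Proof.
  intros Cf Cg Ch; unfold inner.
  rewrite (RInt_extR _ (fun x => al * (extend x0 f x * extend x0 h x) + be * (extend x0 g x * extend x0 h x)))
    by (intros; unfold extend; ring).
  rewrite RInt_plusR, !RInt_scalR; auto; apply ex_RInt_continuity; intros; solve_continuity.
Qed.

Lemma inner_scal a f g :
  (forall x, continuity_pt (extend x0 f) x) -> (forall x, continuity_pt (extend x0 g) x) ->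
  inner x0 (fun x => a * f x) g = a * inner x0 f g.
Proof.
  intros Cf Cg; rewrite <- (Rplus_0_r (a * _)), <- (Rmult_0_l (inner x0 f g)), <- inner_lin by auto.
  unfold inner; apply RInt_extR; intros; unfold extend; ring.
Qed.

Lemma inner_ge0 f : (forall x, continuity_pt (extend x0 f) x) -> 0 <= inner x0 f f.
Proof.
  intros Cf; apply RInt_ge_0; [lra | apply ex_RInt_continuity; intros; solve_continuity |].
  intros; apply Rle_0_sqr.
Qed.

Lemma inner_eq0 f : (forall x, continuity_pt (extend x0 f) x) -> inner x0 f f = 0 ->
  forall x, Iv x0 x -> f x = 0.
Proof.
  intros Cf HI x Hx.
  assert (Hsq : extend x0 f x * extend x0 f x = 0).
  { apply (RInt_eq_0_nonneg (fun x => extend x0 f x * extend x0 f x) (- x0) x0); auto; [lra | |].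
    - intros; solve_continuity.
    - intros; apply Rle_0_sqr. }
  rewrite extend_id in Hsq by auto; nra.
Qed.

Lemma inner_vanish_l f g : (forall x, Iv x0 x -> f x = 0) -> inner x0 f g = 0.
Proof.
  intros Hf; unfold inner; rewrite (RInt_extR _ (fun _ => 0)), RInt_constR; [ring |].
  intros x Hx; rewrite Rmin_left, Rmax_right in Hx by lra.
  rewrite extend_id, Hf by (unfold Iv; lra); ring.
Qed.

Lemma inner_sum_l n (al : nat -> R) (P : nat -> R -> R) g :
  (forall j, (j <= n)%nat -> forall x, continuity_pt (extend x0 (P j)) x) ->
  (forall x, continuity_pt (extend x0 g) x) ->
  inner x0 (fun x => sum_f_R0 (fun j => al j * P j x) n) g = sum_f_R0 (fun j => al j * inner x0 (P j) g) n.
Proof.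
  intros CP Cg; unfold inner.
  rewrite (RInt_extR _ (fun x => sum_f_R0 (fun j => al j * (extend x0 (P j) x * extend x0 g x)) n)).
  - rewrite RInt_sum; [apply sum_eq; intros; apply RInt_scalR, ex_RInt_continuity |];
      intros; solve_continuity.
  - intros; unfold extend; rewrite Rmult_comm, scal_sum; apply sum_eq; intros; ring.
Qed.

Lemma inner_sum_r n (al : nat -> R) (P : nat -> R -> R) g :
  (forall j, (j <= n)%nat -> forall x, continuity_pt (extend x0 (P j)) x) ->
  (forall x, continuity_pt (extend x0 g) x) ->
  inner x0 g (fun x => sum_f_R0 (fun j => al j * P j x) n) = sum_f_R0 (fun j => al j * inner x0 g (P j)) n.
Proof.
  intros; rewrite inner_comm, inner_sum_l by auto; apply sum_eq; intros; now rewrite inner_comm.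
Qed.

Lemma continuity_pt_Lk_form_density f f' F x : Lk_solution x0 k2 f f' F ->
  continuity_pt (fun x => extend x0 (fun y => weight y * f' y) x * extend x0 f' x
                          + extend x0 (potential k2) x * extend x0 f x * extend x0 f x) x.
Proof.
  intros Hf; pose proof (continuity_pt_extend_derivative f f' F x Hf);
    pose proof (continuity_pt_extend_potential x); destruct Hf; solve_continuity.
Qed.

Lemma inner_Lk_sym u u' P w w' W :
  Lk_solution x0 k2 u u' P -> Lk_solution x0 k2 w w' W ->
  clamped_bc x0 u u' -> inner x0 W u = inner x0 P w.
Proof.
  intros Hu Hw [H1 [H2 [H3 H4]]].
  rewrite (green_dirichlet w w' W u u' P), (green_neumann u u' P w w' W), Lk_form_sym; auto.
Qed.

Lemma real_eigenpair_identities a u u' P P' : real_eigenpair x0 k2 a u u' P P' ->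
  inner x0 P u = - Lk_form x0 k2 u u' u u' /\ inner x0 P P = - a * Lk_form x0 k2 u u' u u'.
Proof.
  intros [Hu HP Hbc].
  assert (E : inner x0 P u = - Lk_form x0 k2 u u' u u')
    by (destruct Hbc as [H1 [H2 _]]; apply (green_dirichlet _ _ _ _ _ P); auto).
  split; auto.
  rewrite <- (inner_Lk_sym u u' P P P' (fun x => a * P x)), inner_scal, E by (auto; apply Hu || apply HP).
  ring.
Qed.

Lemma real_eigenpair_orthogonal a1 u1 u1' P1 P1' a2 u2 u2' P2 P2' :
  real_eigenpair x0 k2 a1 u1 u1' P1 P1' -> real_eigenpair x0 k2 a2 u2 u2' P2 P2' -> a1 <> a2 ->
  inner x0 P1 u2 = 0.
Proof.
  intros [Hu1 HP1 Hbc1] [Hu2 HP2 Hbc2] Hne.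
  assert (X1 : a1 * inner x0 P1 u2 = inner x0 P2 P1)
    by (rewrite <- inner_scal by (intros; eapply Lk_cont; eauto); apply (inner_Lk_sym _ u2' _ _ P1'); auto).
  assert (X2 : a2 * inner x0 P2 u1 = inner x0 P1 P2)
    by (rewrite <- inner_scal by (intros; eapply Lk_cont; eauto); apply (inner_Lk_sym _ u1' _ _ P2'); auto).
  assert (X3 : inner x0 P1 u2 = inner x0 P2 u1).
  { destruct Hbc1 as [h1 [h2 _]]; destruct Hbc2 as [e1 [e2 _]].
    rewrite (green_dirichlet u1 u1' P1 u2 u2' P2), (green_dirichlet u2 u2' P2 u1 u1' P1), Lk_form_sym; auto. }
  rewrite (inner_comm P1 P2), <- X3 in X2.
  assert (Hz : (a1 - a2) * inner x0 P1 u2 = 0) by lra.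
  apply Rmult_integral in Hz; destruct Hz; [lra | auto].
Qed.

(* Here mu = a + i b, Psi = u + i v and Phi = P + i Q: these are the imaginary and real
   parts of <L Phi, Psi> = mu <Phi, Psi>, computed with the symmetry of L. *)
Lemma Lk_complex_pairing a b u u' v v' P P' Q Q' :
  Lk_solution x0 k2 u u' P -> Lk_solution x0 k2 v v' Q ->
  Lk_solution x0 k2 P P' (fun x => a * P x - b * Q x) ->
  Lk_solution x0 k2 Q Q' (fun x => b * P x + a * Q x) ->
  clamped_bc x0 u u' -> clamped_bc x0 v v' ->
  b * (Lk_form x0 k2 u u' u u' + Lk_form x0 k2 v v' v v') = 0 /\
  - a * (Lk_form x0 k2 u u' u u' + Lk_form x0 k2 v v' v v') = inner x0 P P + inner x0 Q Q.
Proof.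
  intros Hu Hv HP HQ Hbu Hbv.
  assert (HP' : Lk_solution x0 k2 P P' (fun x => a * P x + - b * Q x))
    by (eapply Lk_solution_ext; [| | | exact HP]; intros; cbv beta; ring).
  assert (Cu := Lk_cont _ _ _ _ _ Hu); assert (Cv := Lk_cont _ _ _ _ _ Hv).
  assert (CP := Lk_cont _ _ _ _ _ HP); assert (CQ := Lk_cont _ _ _ _ _ HQ).
  pose proof Hbu as [u1 [u2 _]]; pose proof Hbv as [v1 [v2 _]].
  assert (E1 : inner x0 P u = - Lk_form x0 k2 u u' u u') by (apply (green_dirichlet _ _ _ _ _ P); auto).
  assert (E2 : inner x0 Q v = - Lk_form x0 k2 v v' v v') by (apply (green_dirichlet _ _ _ _ _ Q); auto).
  assert (E3 : inner x0 P v = - Lk_form x0 k2 u u' v v') by (apply (green_dirichlet _ _ _ _ _ Q); auto).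
  assert (E4 : inner x0 Q u = - Lk_form x0 k2 u u' v v')
    by (rewrite Lk_form_sym; apply (green_dirichlet _ _ _ _ _ P); auto).
  assert (F1 := inner_Lk_sym u u' P P P' _ Hu HP' Hbu).
  assert (F2 := inner_Lk_sym v v' Q Q Q' _ Hv HQ Hbv).
  assert (F3 := inner_Lk_sym u u' P Q Q' _ Hu HQ Hbu).
  assert (F4 := inner_Lk_sym v v' Q P P' _ Hv HP' Hbv).
  rewrite inner_lin in F1, F2, F3, F4 by auto; rewrite (inner_comm Q P) in F4.
  split; nra.
Qed.

Section NonnegativePotential.

Hypothesis k2_ge0 : 0 <= k2.

Lemma potential_clamp_bound x : 0 <= extend x0 (potential k2) x <= k2 / (1 - x0 ^ 2).
Proof.
  pose proof (weight_clamp_ge x); unfold extend, potential, weight in *; split.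
  - apply Rdiv_le_0_compat; lra.
  - apply Rmult_le_compat_l; auto; apply Rinv_le_contravar; lra.
Qed.

Lemma Lk_form_density_ge0 f f' x : 0 <=
  extend x0 (fun y => weight y * f' y) x * extend x0 f' x
  + extend x0 (potential k2) x * extend x0 f x * extend x0 f x.
Proof.
  pose proof (weight_clamp_ge x); pose proof (potential_clamp_bound x); unfold extend in *.
  pose proof (Rle_0_sqr (f' (clamp x0 x))); pose proof (Rle_0_sqr (f (clamp x0 x))).
  unfold Rsqr in *; nra.
Qed.

Lemma Lk_form_ge0 f f' F : Lk_solution x0 k2 f f' F -> 0 <= Lk_form x0 k2 f f' f f'.
Proof.
  intros Hf; apply RInt_ge_0; [lra | | intros; apply Lk_form_density_ge0].
  apply ex_RInt_continuity; intros; apply (continuity_pt_Lk_form_density _ _ F); auto.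
Qed.

Lemma Lk_system_bound y1 y2 y3 y4 al q a M :
  0 <= al <= M -> 0 <= q <= M -> Rabs a + q <= M -> 1 <= M ->
  - (5 * M) * (y1 ^ 2 + y2 ^ 2 + y3 ^ 2 + y4 ^ 2) <=
  2 * (y1 * (y2 * al) + y2 * (y3 + q * y1) + y3 * (y4 * al) + y4 * (a * y3 + q * y3)).
Proof.
  intros Hal Hq Haq HM.
  pose proof (two_mul_ge al y1 y2 M ltac:(rewrite Rabs_right; lra)).
  pose proof (two_mul_ge 1 y2 y3 M ltac:(rewrite Rabs_R1; lra)).
  pose proof (two_mul_ge q y1 y2 M ltac:(rewrite Rabs_right; lra)).
  pose proof (two_mul_ge al y3 y4 M ltac:(rewrite Rabs_right; lra)).
  pose proof (two_mul_ge (a + q) y3 y4 M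
    ltac:(eapply Rle_trans; [apply Rabs_triang | rewrite (Rabs_right q); lra])).
  assert (0 <= M * y1 ^ 2 /\ 0 <= M * y2 ^ 2 /\ 0 <= M * y3 ^ 2 /\ 0 <= M * y4 ^ 2)
    by (repeat split; apply Rmult_le_pos; try lra; apply pow2_ge_0).
  nra.
Qed.

Lemma Lk_coefficients_bound a t M : 1 + Rabs a + (1 + k2) / (1 - x0 ^ 2) <= M ->
  0 <= / extend x0 weight t <= M /\ 0 <= extend x0 (potential k2) t <= M /\
  Rabs a + extend x0 (potential k2) t <= M /\ 1 <= M.
Proof.
  intros HM; pose proof (weight_clamp_ge t) as Hw; pose proof (potential_clamp_bound t) as Hq.
  assert (Hinv : 0 < / (1 - x0 ^ 2)) by (apply Rinv_0_lt_compat; lra).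
  replace ((1 + k2) / (1 - x0 ^ 2)) with (k2 / (1 - x0 ^ 2) + / (1 - x0 ^ 2)) in HM by (field; lra).
  assert (Hal : 0 <= / extend x0 weight t <= / (1 - x0 ^ 2)).
  { split; [left; apply Rinv_0_lt_compat | apply Rinv_le_contravar]; unfold extend; lra. }
  pose proof (Rabs_pos a); lra.
Qed.

(* The system is first order in (u, weight u', P, weight P'), and its coefficients
   are bounded on [-x0, x0]; zero Cauchy data at x0 force the solution to vanish. *)
Lemma Lk_system_unique a u u' P P' :
  Lk_solution x0 k2 u u' P -> Lk_solution x0 k2 P P' (fun x => a * P x) ->
  u x0 = 0 -> u' x0 = 0 -> P x0 = 0 -> P' x0 = 0 -> forall x, Iv x0 x -> u x = 0.
Proof.
  intros Hu HP Hu0 Hu'0 HP0 HP'0 x Hx.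
  set (y1 := extend x0 u); set (y2 := extend x0 (fun y => weight y * u' y)).
  set (y3 := extend x0 P); set (y4 := extend x0 (fun y => weight y * P' y)).
  set (al := fun t => / extend x0 weight t); set (q := extend x0 (potential k2)).
  set (g := fun t => y1 t ^ 2 + y2 t ^ 2 + y3 t ^ 2 + y4 t ^ 2).
  set (M := 1 + Rabs a + (1 + k2) / (1 - x0 ^ 2)).
  assert (Hsq : forall r, 0 <= r ^ 2) by (intros; apply pow2_ge_0).
  assert (Hg : g x = 0).
  { apply (gronwall_vanish g (fun t => 2 * (y1 t * (y2 t * al t) + y2 t * (y3 t + q t * y1 t)
                                + y3 t * (y4 t * al t) + y4 t * (a * y3 t + q t * y3 t)))
                           (5 * M) (- x0) x0 x); auto.
    - intros t; destruct Hu, HP; unfold g; repeat apply continuity_pt_plus; apply continuity_pt_sqr; auto.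
    - intros t Ht; assert (Hw : weight t <> 0)
        by (pose proof (weight_clamp_ge t); rewrite clamp_id in * by (unfold Iv; lra); lra).
      assert (Hd : forall (f : R -> R) (l1 l2 : R), l1 = l2 -> is_derive f t l1 -> is_derive (extend x0 f) t l2)
        by (intros f l1 l2 <- Hf; apply is_derive_extend; auto).
      assert (Hext : forall f, extend x0 f t = f t) by (intros; apply extend_id; unfold Iv; lra).
      replace (2 * _) with (2 * y1 t * (y2 t * al t) + 2 * y2 t * (y3 t + q t * y1 t)
                            + 2 * y3 t * (y4 t * al t) + 2 * y4 t * (a * y3 t + q t * y3 t)) by ring.
      unfold g; repeat apply is_derive_plusR; apply is_derive_sqr.
      + apply (Hd _ (u' t)); [| apply (Lk_derive _ _ _ _ _ Hu t Ht)].
        unfold y2, al; rewrite !Hext; field; auto.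
      + apply (Hd _ (P t + potential k2 t * u t)); [| apply (Lk_derive_flux _ _ _ _ _ Hu t Ht)].
        unfold y3, q, y1; rewrite !Hext; ring.
      + apply (Hd _ (P' t)); [| apply (Lk_derive _ _ _ _ _ HP t Ht)].
        unfold y4, al; rewrite !Hext; field; auto.
      + apply (Hd _ (a * P t + potential k2 t * P t)); [| apply (Lk_derive_flux _ _ _ _ _ HP t Ht)].
        unfold y3, q; rewrite !Hext; ring.
    - intros t _; destruct (Lk_coefficients_bound a t M (Rle_refl _)) as [Hal [Hq [Haq HM]]].
      apply Lk_system_bound; auto.
    - unfold g; pose proof (Hsq (y1 x)); pose proof (Hsq (y2 x)); pose proof (Hsq (y3 x));
        pose proof (Hsq (y4 x)); lra.
    - unfold g, y1, y2, y3, y4; rewrite !extend_id by (unfold Iv; lra).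
      rewrite Hu0, Hu'0, HP0, HP'0; ring. }
  unfold g in Hg; pose proof (Hsq (y1 x)); pose proof (Hsq (y2 x)); pose proof (Hsq (y3 x));
    pose proof (Hsq (y4 x)).
  assert (Hy1 : y1 x ^ 2 = 0) by lra.
  unfold y1 in Hy1; rewrite extend_id in Hy1 by auto; nra.
Qed.

Lemma real_eigenpair_form_le a u u' P P' Rb : 0 < Rb -> - a <= Rb ->
  real_eigenpair x0 k2 a u u' P P' -> Lk_form x0 k2 u u' u u' <= Rb * inner x0 u u.
Proof.
  intros HR Ha He; destruct (real_eigenpair_identities _ _ _ _ _ He) as [E1 E2].
  destruct He as [Hu HP _].
  assert (CP := Lk_cont _ _ _ _ _ HP); assert (Cu := Lk_cont _ _ _ _ _ Hu).
  assert (En := Lk_form_ge0 _ _ _ Hu).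
  (* expand 0 <= |P + Rb u|^2 *)
  set (w := fun x => 1 * P x + Rb * u x).
  assert (Cw : forall x, continuity_pt (extend x0 w) x) by (intros; unfold w, extend; solve_continuity).
  assert (N := inner_ge0 w Cw).
  unfold w at 1 in N; rewrite inner_lin, (inner_comm P w), (inner_comm u w) in N by auto.
  unfold w in N; rewrite !inner_lin, (inner_comm u P), E1, E2 in N by auto.
  set (E0 := Lk_form x0 k2 u u' u u') in *.
  assert (Rb * E0 <= Rb * (Rb * inner x0 u u)) by nra.
  apply Rmult_le_reg_l with Rb; auto.
Qed.

(* Cauchy-Schwarz on f(s) = RInt f' from -x0 to s, and weight >= 1 - x0^2. *)
Lemma sqr_le_Lk_form f f' F s : Lk_solution x0 k2 f f' F -> f (- x0) = 0 -> Iv x0 s ->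
  extend x0 f s ^ 2 <= 2 * x0 / (1 - x0 ^ 2) * Lk_form x0 k2 f f' f f'.
Proof.
  intros Hf Hf0 Hs.
  assert (Cd := fun x => continuity_pt_extend_derivative f f' F x Hf).
  assert (Cd2 : forall x, continuity_pt (fun x => extend x0 f' x ^ 2) x)
    by (intros; apply continuity_pt_sqr; auto).
  assert (Hw := weight_clamp_ge 0); unfold Iv in Hs.
  assert (Hftc : RInt (extend x0 f') (- x0) s = extend x0 f s).
  { rewrite (RInt_derive_interior (extend x0 f)); [| lra | apply (Lk_cont _ _ _ _ _ Hf) | auto |].
    - rewrite (extend_id x0 f (- x0)), Hf0 by (unfold Iv; lra); apply Rminus_0_r.
    - intros x Hx; apply is_derive_extend; [lra |].
      rewrite extend_id by (unfold Iv; lra); apply (Lk_derive _ _ _ _ _ Hf); lra. }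
  assert (HCS := RInt_sqr_le (extend x0 f') (- x0) s ltac:(lra) Cd); rewrite Hftc in HCS.
  set (I := RInt (fun x => extend x0 f' x ^ 2) (- x0) x0).
  assert (Hsub : RInt (fun x => extend x0 f' x ^ 2) (- x0) s <= I).
  { unfold I; rewrite <- (RInt_ChaslesR _ (- x0) s x0) by (apply ex_RInt_continuity; auto).
    assert (0 <= RInt (fun x => extend x0 f' x ^ 2) s x0); [| lra].
    apply RInt_ge_0; [lra | apply ex_RInt_continuity; auto | intros; apply pow2_ge_0]. }
  assert (Hform : (1 - x0 ^ 2) * I <= Lk_form x0 k2 f f' f f').
  { unfold I; rewrite <- RInt_scalR by (apply ex_RInt_continuity; auto).
    apply RInt_le; [lra | apply ex_RInt_continuity; intros; solve_continuity | |].
    - apply ex_RInt_continuity; intros; apply (continuity_pt_Lk_form_density _ _ F); auto.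
    - intros x _; pose proof (weight_clamp_ge x); pose proof (potential_clamp_bound x).
      unfold extend in *; pose proof (Rle_0_sqr (f (clamp x0 x))); pose proof (pow2_ge_0 (f' (clamp x0 x))).
      unfold Rsqr in *; nra. }
  assert (HI0 : 0 <= RInt (fun x => extend x0 f' x ^ 2) (- x0) s)
    by (apply RInt_ge_0; [lra | apply ex_RInt_continuity; auto | intros; apply pow2_ge_0]).
  assert (HI : I <= Lk_form x0 k2 f f' f f' / (1 - x0 ^ 2))
    by (apply Rmult_le_reg_l with (1 - x0 ^ 2); [lra |]; field_simplify; lra).
  assert (extend x0 f s ^ 2 <= 2 * x0 * I) by nra.
  unfold Rdiv in *; nra.
Qed.

End NonnegativePotential.

Section PositivePotential.

Hypothesis k2_gt0 : 0 < k2.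
Let k2_ge0 : 0 <= k2 := Rlt_le _ _ k2_gt0.

Lemma Lk_form_gt0 f f' F x1 : Lk_solution x0 k2 f f' F -> Iv x0 x1 -> f x1 <> 0 ->
  0 < Lk_form x0 k2 f f' f f'.
Proof.
  intros Hf Hx1 Hfx1; apply RInt_gt_0_pt with x1; auto; [lra | | apply Lk_form_density_ge0; auto |].
  - intros; apply (continuity_pt_Lk_form_density _ _ F); auto.
  - pose proof (weight_clamp_ge x1); unfold extend, potential in *; rewrite clamp_id in * by auto.
    pose proof (Rle_0_sqr (f' x1)); pose proof (Rsqr_pos_lt _ Hfx1); unfold weight, Rsqr in *.
    assert (0 < k2 / (1 - x1 ^ 2) * (f x1 * f x1)) by (apply Rmult_lt_0_compat; auto; apply Rdiv_lt_0_compat; lra).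
    nra.
Qed.

Lemma Lk_complex_eigenvalue_real_neg a b u u' v v' P P' Q Q' :
  Lk_solution x0 k2 u u' P -> Lk_solution x0 k2 v v' Q ->
  Lk_solution x0 k2 P P' (fun x => a * P x - b * Q x) ->
  Lk_solution x0 k2 Q Q' (fun x => b * P x + a * Q x) ->
  clamped_bc x0 u u' -> clamped_bc x0 v v' ->
  (exists x1, Iv x0 x1 /\ (u x1 <> 0 \/ v x1 <> 0)) -> b = 0 /\ a < 0.
Proof.
  intros Hu Hv HP HQ Hbu Hbv [x1 [Hx1 Hne]].
  destruct (Lk_complex_pairing a b u u' v v' P P' Q Q' Hu Hv HP HQ Hbu Hbv) as [Him Hre].
  set (Eu := Lk_form x0 k2 u u' u u') in *; set (Ev := Lk_form x0 k2 v v' v v') in *.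
  assert (Hpos : 0 < Eu + Ev).
  { pose proof (Lk_form_ge0 k2_ge0 _ _ _ Hu); pose proof (Lk_form_ge0 k2_ge0 _ _ _ Hv).
    destruct Hne as [Hne | Hne];
      [pose proof (Lk_form_gt0 _ _ _ x1 Hu Hx1 Hne) | pose proof (Lk_form_gt0 _ _ _ x1 Hv Hx1 Hne)];
      unfold Eu, Ev in *; lra. }
  assert (Hb : b = 0) by (apply Rmult_integral in Him; destruct Him; [auto | lra]).
  split; [exact Hb |].
  assert (CP := Lk_cont _ _ _ _ _ HP); assert (CQ := Lk_cont _ _ _ _ _ HQ).
  pose proof (inner_ge0 P CP); pose proof (inner_ge0 Q CQ).
  destruct (Rtotal_order a 0) as [| [Ha | Ha]]; [auto | exfalso | nra].
  (* for a = 0, P and Q vanish, hence so do B(u, u) = - <P, u> and B(v, v) = - <Q, v> *)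
  subst a; destruct Hbu as [u1 [u2 _]], Hbv as [v1 [v2 _]].
  assert (ZP : inner x0 P u = 0) by (apply inner_vanish_l, inner_eq0; auto; lra).
  assert (ZQ : inner x0 Q v = 0) by (apply inner_vanish_l, inner_eq0; auto; lra).
  rewrite (green_dirichlet u u' P u u' P) in ZP by auto.
  rewrite (green_dirichlet v v' Q v v' Q) in ZQ by auto.
  unfold Eu, Ev in *; lra.
Qed.

Section Eigenfamily.

Variables (n : nat) (a : nat -> R) (u u' P P' : nat -> R -> R).
Hypothesis family_eigenpair :
  forall j, (j <= n)%nat -> real_eigenpair x0 k2 (a j) (u j) (u' j) (P j) (P' j).
Hypothesis family_nonzero : forall j, (j <= n)%nat -> exists x1, Iv x0 x1 /\ u j x1 <> 0.
Hypothesis family_distinct : forall i j, (i <= n)%nat -> (j <= n)%nat -> i <> j -> a i <> a j.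

Let E j := Lk_form x0 k2 (u j) (u' j) (u j) (u' j).

Lemma family_form_pos j : (j <= n)%nat -> 0 < E j.
Proof.
  intros Hj; destruct (family_nonzero j Hj) as [x1 [Hx1 Hne]].
  apply (Lk_form_gt0 _ _ (P j) x1); auto; apply (family_eigenpair j Hj).
Qed.

Lemma family_cont j x : (j <= n)%nat -> continuity_pt (extend x0 (u j)) x.
Proof. intros Hj; apply (Lk_cont _ _ _ _ _ (eig_Lu _ _ _ _ _ _ _ (family_eigenpair j Hj))). Qed.

Lemma family_cont_rhs j x : (j <= n)%nat -> continuity_pt (extend x0 (P j)) x.
Proof. intros Hj; apply (Lk_cont _ _ _ _ _ (eig_LP _ _ _ _ _ _ _ (family_eigenpair j Hj))). Qed.

(* psi = sum_j (u_j(s) / E_j) u_j has, by orthogonality, both psi(s) and B(psi, psi)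
   equal to the sum below; the pointwise bound B(psi, psi) >= psi(s)^2 / C then gives the claim. *)
Lemma family_sum_pointwise s : Iv x0 s ->
  sum_f_R0 (fun j => extend x0 (u j) s ^ 2 / E j) n <= 2 * x0 / (1 - x0 ^ 2).
Proof.
  intros Hs.
  set (S := sum_f_R0 (fun j => extend x0 (u j) s ^ 2 / E j) n).
  set (al := fun j => extend x0 (u j) s / E j).
  set (psi := fun x => sum_f_R0 (fun j => al j * u j x) n).
  set (psi' := fun x => sum_f_R0 (fun j => al j * u' j x) n).
  set (Psi := fun x => sum_f_R0 (fun j => al j * P j x) n).
  assert (Hpsi : Lk_solution x0 k2 psi psi' Psi)
    by (apply Lk_solution_sum; intros j Hj; apply (family_eigenpair j Hj)).
  assert (Hpsi0 : forall y, y = x0 \/ y = - x0 -> psi y = 0).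
  { intros y Hy; unfold psi; rewrite (sum_eq _ (fun _ => 0)), sum_cte; [ring |].
    intros j Hj; destruct (family_eigenpair j Hj) as [_ _ [H1 [H2 _]]].
    destruct Hy as [-> | ->]; [rewrite H1 | rewrite H2]; ring. }
  assert (Hform : Lk_form x0 k2 psi psi' psi psi' = S).
  { rewrite <- (Ropp_involutive (Lk_form _ _ _ _ _ _)), <- (green_dirichlet psi psi' Psi psi psi' Psi)
      by (auto; apply Hpsi0; auto).
    unfold Psi at 1; rewrite inner_sum_l by (auto using family_cont_rhs; apply (Lk_cont _ _ _ _ _ Hpsi)).
    enough (Hsum : sum_f_R0 (fun j => al j * inner x0 (P j) psi) n = -1 * S) by lra.
    unfold S; rewrite scal_sum; apply sum_eq; intros j Hj; pose proof (family_form_pos j Hj).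
    unfold psi; rewrite inner_sum_r by (auto using family_cont, family_cont_rhs).
    rewrite (sum_f_R0_single _ n j Hj).
    - destruct (real_eigenpair_identities _ _ _ _ _ (family_eigenpair j Hj)) as [-> _].
      fold (E j); unfold al; field; lra.
    - intros l Hl Hlj; rewrite (real_eigenpair_orthogonal _ _ _ _ _ _ _ _ _ _
        (family_eigenpair j Hj) (family_eigenpair l Hl)); [ring | apply family_distinct; auto]. }
  assert (Hval : extend x0 psi s = S).
  { unfold psi, S, extend; apply sum_eq; intros j Hj; pose proof (family_form_pos j Hj).
    unfold al, extend; field; lra. }
  assert (HS : 0 <= S).
  { apply Rle_trans with (sum_f_R0 (fun _ => 0) n); [rewrite sum_cte; lra |].
    apply sum_Rle; intros j Hj; apply Rdiv_le_0_compat; [apply pow2_ge_0 | apply family_form_pos; auto]. }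
  pose proof (sqr_le_Lk_form k2_ge0 psi psi' Psi s Hpsi (Hpsi0 (- x0) (or_intror eq_refl)) Hs) as Hb.
  rewrite Hform, Hval in Hb.
  assert (0 < 2 * x0 / (1 - x0 ^ 2)) by (apply Rdiv_lt_0_compat; nra).
  nra.
Qed.

Lemma family_count Rb : 0 < Rb -> (forall j, (j <= n)%nat -> - a j <= Rb) ->
  INR (S n) <= 2 * x0 * (2 * x0 / (1 - x0 ^ 2)) * Rb.
Proof.
  intros HRb Ha.
  set (C0 := 2 * x0 / (1 - x0 ^ 2)).
  set (Sf := fun s => sum_f_R0 (fun j => extend x0 (u j) s ^ 2 / E j) n).
  assert (CS : forall j, (j <= n)%nat -> forall x, continuity_pt (fun s => extend x0 (u j) s ^ 2 / E j) x).
  { intros j Hj x; apply continuity_pt_mult; [apply continuity_pt_sqr, family_cont; auto |].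
    apply continuity_pt_cst. }
  assert (Hup : RInt Sf (- x0) x0 <= C0 * (x0 - - x0)).
  { rewrite <- RInt_constR; apply RInt_le; [lra | | apply ex_RInt_continuity, continuity_pt_cst |].
    - apply ex_RInt_continuity; intros; apply continuity_pt_sum; auto.
    - intros x Hx; apply family_sum_pointwise; unfold Iv; lra. }
  assert (Hint : RInt Sf (- x0) x0 = sum_f_R0 (fun j => / E j * inner x0 (u j) (u j)) n).
  { unfold Sf; rewrite RInt_sum by auto; apply sum_eq; intros j Hj.
    unfold inner; rewrite <- RInt_scalR by (apply ex_RInt_continuity; intros; apply continuity_pt_mult;
      apply family_cont; auto).
    apply RInt_extR; intros; unfold Rdiv; ring. }
  assert (Hlow : sum_f_R0 (fun _ => / Rb) n <= sum_f_R0 (fun j => / E j * inner x0 (u j) (u j)) n).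
  { apply sum_Rle; intros j Hj; pose proof (family_form_pos j Hj).
    pose proof (real_eigenpair_form_le k2_ge0 _ _ _ _ _ Rb HRb (Ha j Hj) (family_eigenpair j Hj)).
    fold (E j) in *.
    apply Rmult_le_reg_l with (E j * Rb); [apply Rmult_lt_0_compat; lra |].
    replace (E j * Rb * / Rb) with (E j) by (field; lra).
    replace (E j * Rb * (/ E j * inner x0 (u j) (u j))) with (Rb * inner x0 (u j) (u j)) by (field; lra).
    lra. }
  rewrite sum_cte in Hlow.
  apply Rmult_le_reg_r with (/ Rb); [apply Rinv_0_lt_compat; auto |].
  replace (2 * x0 * C0 * Rb * / Rb) with (C0 * (x0 - - x0)) by (field; lra).
  lra.
Qed.

End Eigenfamily.

End PositivePotential.

End Operator.

(** * Complex solutions and eigenvalues *)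

Definition Lk_solutionC (x0 k2 : R) (u u' F : R -> C) : Prop :=
  Lk_solution x0 k2 (fun x => Re (u x)) (fun x => Re (u' x)) (fun x => Re (F x)) /\
  Lk_solution x0 k2 (fun x => Im (u x)) (fun x => Im (u' x)) (fun x => Im (F x)).

Lemma C_eq_Re_Im (z w : C) : Re z = Re w -> Im z = Im w -> z = w.
Proof. destruct z, w; simpl; intros -> ->; reflexivity. Qed.

Lemma deriv_on_unique x0 f f1 f2 x :
  0 < x0 -> deriv_on x0 f f1 -> deriv_on x0 f f2 -> Iv x0 x -> f1 x = f2 x.
Proof.
  intros H0 H1 H2 Hx; apply deriv_on_Re_Im in H1, H2.
  apply C_eq_Re_Im;
    [apply (derive_within_unique x0 (fun x => Re (f x)) (fun x => Re (f1 x)) (fun x => Re (f2 x)))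
    | apply (derive_within_unique x0 (fun x => Im (f x)) (fun x => Im (f1 x)) (fun x => Im (f2 x)))]; tauto.
Qed.

Section ComplexSolutions.

Variables x0 k2 : R.
Hypothesis x0_bounds : 0 < x0 < 1.

Lemma Lk_eq_solutionC k F G : Lk_eq k x0 F G ->
  (forall x, continuity_pt (extend x0 (fun y => Re (G y))) x) ->
  (forall x, continuity_pt (extend x0 (fun y => Im (G y))) x) ->
  exists F', deriv_on x0 F F' /\ Lk_solutionC x0 (IZR k ^ 2) F F' G.
Proof.
  intros [F' [W [DF [DW EW]]]] CRe CIm; exists F'; split; auto.
  destruct (deriv_on_Re_Im _ _ _ DF) as [DFRe DFIm]; destruct (deriv_on_Re_Im _ _ _ DW) as [DWRe DWIm].
  split; [apply (Lk_solution_of_derive_within _ _ x0_bounds _ _ (fun x => Re (W x)))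
         | apply (Lk_solution_of_derive_within _ _ x0_bounds _ _ (fun x => Im (W x)))]; auto.
  - eapply derive_within_ext; [| | exact DWRe]; intros; [apply re_scal_l | reflexivity].
  - intros x Hx; rewrite EW by auto; unfold potential; destruct (W x), (F x); simpl; ring.
  - eapply derive_within_ext; [| | exact DWIm]; intros; [apply im_scal_l | reflexivity].
  - intros x Hx; rewrite EW by auto; unfold potential; destruct (W x), (F x); simpl; ring.
Qed.

Lemma deriv_on_continuity f f' : deriv_on x0 f f' ->
  (forall x, continuity_pt (extend x0 (fun y => Re (f y))) x) /\
  (forall x, continuity_pt (extend x0 (fun y => Im (f y))) x).
Proof.
  intros Hf; destruct (deriv_on_Re_Im _ _ _ Hf) as [HRe HIm].
  split; intros; eapply continuity_pt_extend_derive_within; eauto; lra.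
Qed.

Lemma in_eigenspace_split k mu Psi : in_eigenspace k x0 mu Psi ->
  exists Psi' Phi Phi' : R -> C,
    Lk_solutionC x0 (IZR k ^ 2) Psi Psi' Phi /\
    Lk_solutionC x0 (IZR k ^ 2) Phi Phi' (fun x => mu * Phi x)%C /\
    Psi x0 = 0%C /\ Psi (- x0) = 0%C /\ Psi' x0 = 0%C /\ Psi' (- x0) = 0%C.
Proof.
  intros [Psi' [Phi [DPsi [_ [h1 [h2 [h3 [h4 [L1 L2]]]]]]]]].
  pose proof L2 as [Phi'' [_ [DPhi _]]].
  destruct (deriv_on_continuity _ _ DPhi) as [CRe CIm].
  destruct (Lk_eq_solutionC _ _ _ L1 CRe CIm) as [F' [DF [HRe HIm]]].
  destruct (Lk_eq_solutionC _ _ _ L2) as [Phi' [_ HPhi]].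
  - intros x; apply continuity_pt_ext with
      (fun x => Re mu * extend x0 (fun y => Re (Phi y)) x - Im mu * extend x0 (fun y => Im (Phi y)) x).
    + intros; unfold extend; rewrite re_mult; reflexivity.
    + apply continuity_pt_minus; apply continuity_pt_scal; auto.
  - intros x; apply continuity_pt_ext with
      (fun x => Re mu * extend x0 (fun y => Im (Phi y)) x + Im mu * extend x0 (fun y => Re (Phi y)) x).
    + intros; unfold extend; rewrite im_mult; reflexivity.
    + apply continuity_pt_plus; apply continuity_pt_scal; auto.
  - assert (E : forall x, Iv x0 x -> F' x = Psi' x) by (intros; apply (deriv_on_unique x0 Psi); auto; lra).
    exists Psi', Phi, Phi'; split; [split | split; [exact HPhi | auto]].
    + refine (Lk_solution_ext x0 _ x0_bounds _ _ _ _ _ _ _ _ _ HRe); intros; rewrite ?E; auto.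
    + refine (Lk_solution_ext x0 _ x0_bounds _ _ _ _ _ _ _ _ _ HIm); intros; rewrite ?E; auto.
Qed.

Lemma Lk_solutionC_lin u u' F v v' G (c d : C) :
  Lk_solutionC x0 k2 u u' F -> Lk_solutionC x0 k2 v v' G ->
  Lk_solutionC x0 k2 (fun x => c * u x + d * v x)%C (fun x => c * u' x + d * v' x)%C
    (fun x => c * F x + d * G x)%C.
Proof.
  intros [Hu1 Hu2] [Hv1 Hv2].
  pose proof (Lk_solution_lin _ _ _ _ _ _ _ _ 1 1
    (Lk_solution_lin _ _ _ _ _ _ _ _ (Re c) (- Im c) Hu1 Hu2)
    (Lk_solution_lin _ _ _ _ _ _ _ _ (Re d) (- Im d) Hv1 Hv2)) as HRe.
  pose proof (Lk_solution_lin _ _ _ _ _ _ _ _ 1 1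
    (Lk_solution_lin _ _ _ _ _ _ _ _ (Im c) (Re c) Hu1 Hu2)
    (Lk_solution_lin _ _ _ _ _ _ _ _ (Im d) (Re d) Hv1 Hv2)) as HIm.
  split; [refine (Lk_solution_ext x0 _ x0_bounds _ _ _ _ _ _ _ _ _ HRe)
         | refine (Lk_solution_ext x0 _ x0_bounds _ _ _ _ _ _ _ _ _ HIm)];
    intros; rewrite ?re_plus, ?im_plus, ?re_mult, ?im_mult; ring.
Qed.

Lemma Lk_solutionC_real_eigen mu Phi Phi' : Im mu = 0 ->
  Lk_solutionC x0 k2 Phi Phi' (fun x => mu * Phi x)%C ->
  Lk_solution x0 k2 (fun x => Re (Phi x)) (fun x => Re (Phi' x)) (fun x => Re mu * Re (Phi x)) /\
  Lk_solution x0 k2 (fun x => Im (Phi x)) (fun x => Im (Phi' x)) (fun x => Re mu * Im (Phi x)).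
Proof.
  intros Hmu [HRe HIm]; split;
    [refine (Lk_solution_ext x0 _ x0_bounds _ _ _ _ _ _ _ _ _ HRe)
    | refine (Lk_solution_ext x0 _ x0_bounds _ _ _ _ _ _ _ _ _ HIm)];
    intros; auto; rewrite ?re_mult, ?im_mult, Hmu; ring.
Qed.

Lemma Lk_solutionC_unique mu Psi Psi' Phi Phi' : 0 <= k2 -> Im mu = 0 ->
  Lk_solutionC x0 k2 Psi Psi' Phi -> Lk_solutionC x0 k2 Phi Phi' (fun x => mu * Phi x)%C ->
  Psi x0 = 0%C -> Psi' x0 = 0%C -> Phi x0 = 0%C -> Phi' x0 = 0%C -> forall x, Iv x0 x -> Psi x = 0%C.
Proof.
  intros Hk Hmu [HRe HIm] HPhi H1 H2 H3 H4 x Hx.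
  destruct (Lk_solutionC_real_eigen _ _ _ Hmu HPhi) as [HPRe HPIm].
  apply C_eq_Re_Im; simpl;
    [apply (Lk_system_unique x0 k2 x0_bounds Hk (Re mu) _ _ _ _ HRe HPRe)
    | apply (Lk_system_unique x0 k2 x0_bounds Hk (Re mu) _ _ _ _ HIm HPIm)];
    rewrite ?H1, ?H2, ?H3, ?H4; auto.
Qed.

Lemma Lk_solutionC_ext u u' F v v' G :
  (forall x, Iv x0 x -> u x = v x) -> (forall x, Iv x0 x -> u' x = v' x) ->
  (forall x, Iv x0 x -> F x = G x) -> Lk_solutionC x0 k2 u u' F -> Lk_solutionC x0 k2 v v' G.
Proof.
  intros Eu Eu' EF [HRe HIm]; split;
    [refine (Lk_solution_ext x0 _ x0_bounds _ _ _ _ _ _ _ _ _ HRe)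
    | refine (Lk_solution_ext x0 _ x0_bounds _ _ _ _ _ _ _ _ _ HIm)];
    intros x Hx; rewrite ?Eu, ?Eu', ?EF; auto.
Qed.

End ComplexSolutions.

Lemma C2_three_dependent (a1 a2 a3 b1 b2 b3 : C) : exists c1 c2 c3 : C,
  (c1 <> 0%C \/ c2 <> 0%C \/ c3 <> 0%C) /\
  (c1 * a1 + c2 * a2 + c3 * a3 = 0)%C /\ (c1 * b1 + c2 * b2 + c3 * b3 = 0)%C.
Proof.
  assert (Hopp : forall z : C, z <> 0%C -> (- z)%C <> 0%C)
    by (intros z Hz E; apply Hz; replace z with (- - z)%C by ring; rewrite E; apply Copp_0).
  (* the cross product of (a1, a2, a3) and (b1, b2, b3), unless it vanishes *)
  destruct (classic ((a2 * b3 - a3 * b2)%C <> 0%C \/ (a3 * b1 - a1 * b3)%C <> 0%C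
                     \/ (a1 * b2 - a2 * b1)%C <> 0%C)) as [Hd | Hd].
  { exists (a2 * b3 - a3 * b2)%C, (a3 * b1 - a1 * b3)%C, (a1 * b2 - a2 * b1)%C; split; auto; split; ring. }
  assert (d3 : (a1 * b2 - a2 * b1)%C = 0%C) by (apply NNPP; tauto).
  destruct (classic (a1 <> 0%C \/ a2 <> 0%C)) as [Ha | Ha].
  { exists a2, (- a1)%C, 0%C; split; [destruct Ha; auto |].
    split; [ring |]; transitivity (- (a1 * b2 - a2 * b1))%C; [ring | rewrite d3; apply Copp_0]. }
  assert (e1 : a1 = 0%C) by (apply NNPP; tauto); assert (e2 : a2 = 0%C) by (apply NNPP; tauto).
  destruct (classic (a3 = 0%C)) as [e3 | e3].
  - destruct (classic (b1 <> 0%C \/ b2 <> 0%C)) as [Hb | Hb].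
    + exists b2, (- b1)%C, 0%C; split; [destruct Hb; auto |]; subst; split; ring.
    + assert (f1 : b1 = 0%C) by (apply NNPP; tauto).
      exists 1%C, 0%C, 0%C; split; [left; apply C1_nz |]; subst; split; ring.
  - assert (d2 : (a3 * b1 - a1 * b3)%C = 0%C) by (apply NNPP; tauto).
    exists a3, 0%C, (- a1)%C; split; [left; auto |]; split; [ring |].
    transitivity (a3 * b1 - a1 * b3)%C; [ring | exact d2].
Qed.

Section Eigenvalues.

Variables (k : Z) (x0 : R).
Hypothesis k_neq0 : k <> 0%Z.
Hypothesis x0_bounds : 0 < x0 < 1.

Let k2_gt0 : 0 < IZR k ^ 2 := pow2_gt_0 _ (not_0_IZR _ k_neq0).

Lemma is_eigenvalue_split mu : is_eigenvalue k x0 mu ->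
  exists Psi Psi' Phi Phi' : R -> C,
    Lk_solutionC x0 (IZR k ^ 2) Psi Psi' Phi /\
    Lk_solutionC x0 (IZR k ^ 2) Phi Phi' (fun x => mu * Phi x)%C /\
    clamped_bc x0 (fun x => Re (Psi x)) (fun x => Re (Psi' x)) /\
    clamped_bc x0 (fun x => Im (Psi x)) (fun x => Im (Psi' x)) /\
    exists x1, Iv x0 x1 /\ (Re (Psi x1) <> 0 \/ Im (Psi x1) <> 0).
Proof.
  intros [Psi [HE [x1 [Hx1 Hne]]]].
  destruct (in_eigenspace_split x0 x0_bounds k mu Psi HE)
    as [Psi' [Phi [Phi' [HPsi [HPhi [h1 [h2 [h3 h4]]]]]]]].
  exists Psi, Psi', Phi, Phi'; do 2 (split; [assumption |]).
  unfold clamped_bc; rewrite h1, h2, h3, h4; split; [repeat split | split; [repeat split |]].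
  exists x1; split; auto.
  destruct (Req_dec (Re (Psi x1)) 0) as [HRe | HRe]; [right | left]; auto.
  intros HIm; apply Hne, C_eq_Re_Im; auto.
Qed.

Lemma eigenvalue_real_neg mu : is_eigenvalue k x0 mu -> Im mu = 0 /\ Re mu < 0.
Proof.
  intros Hmu.
  destruct (is_eigenvalue_split mu Hmu) as [Psi [Psi' [Phi [Phi' [[Hu Hv] [[HP HQ] [Hbu [Hbv Hne]]]]]]]].
  assert (HP' : Lk_solution x0 (IZR k ^ 2) (fun x => Re (Phi x)) (fun x => Re (Phi' x))
                  (fun x => Re mu * Re (Phi x) - Im mu * Im (Phi x)))
    by (refine (Lk_solution_ext x0 _ x0_bounds _ _ _ _ _ _ _ _ _ HP); auto; intros; apply re_mult).
  assert (HQ' : Lk_solution x0 (IZR k ^ 2) (fun x => Im (Phi x)) (fun x => Im (Phi' x))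
                  (fun x => Im mu * Re (Phi x) + Re mu * Im (Phi x)))
    by (refine (Lk_solution_ext x0 _ x0_bounds _ _ _ _ _ _ _ _ _ HQ); auto; intros; rewrite im_mult; ring).
  exact (Lk_complex_eigenvalue_real_neg x0 _ x0_bounds k2_gt0 _ _ _ _ _ _ _ _ _ _ Hu Hv HP' HQ' Hbu Hbv Hne).
Qed.

Lemma eigenvalue_real_eigenpair mu : is_eigenvalue k x0 mu ->
  exists u u' P P' : R -> R,
    real_eigenpair x0 (IZR k ^ 2) (Re mu) u u' P P' /\ exists x1, Iv x0 x1 /\ u x1 <> 0.
Proof.
  intros Hmu; destruct (eigenvalue_real_neg mu Hmu) as [Him _].
  destruct (is_eigenvalue_split mu Hmu) as [Psi [Psi' [Phi [Phi' [[Hu Hv] [HPhi [Hbu [Hbv [x1 [Hx1 Hne]]]]]]]]]].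
  destruct (Lk_solutionC_real_eigen x0 _ x0_bounds mu Phi Phi' Him HPhi) as [HP HQ].
  destruct Hne as [Hne | Hne].
  - exists (fun x => Re (Psi x)), (fun x => Re (Psi' x)), (fun x => Re (Phi x)), (fun x => Re (Phi' x)).
    split; [constructor |]; eauto.
  - exists (fun x => Im (Psi x)), (fun x => Im (Psi' x)), (fun x => Im (Phi x)), (fun x => Im (Phi' x)).
    split; [constructor |]; eauto.
Qed.

Lemma in_eigenspace_dim_le2 mu Psi1 Psi2 Psi3 : Im mu = 0 ->
  in_eigenspace k x0 mu Psi1 -> in_eigenspace k x0 mu Psi2 -> in_eigenspace k x0 mu Psi3 ->
  exists c1 c2 c3 : C, (c1 <> 0%C \/ c2 <> 0%C \/ c3 <> 0%C) /\
    forall x, Iv x0 x -> (c1 * Psi1 x + c2 * Psi2 x + c3 * Psi3 x)%C = 0%C.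
Proof.
  intros Hmu E1 E2 E3.
  destruct (in_eigenspace_split x0 x0_bounds k mu Psi1 E1)
    as [Psi1' [Phi1 [Phi1' [H1 [K1 [a1 [_ [b1 _]]]]]]]].
  destruct (in_eigenspace_split x0 x0_bounds k mu Psi2 E2)
    as [Psi2' [Phi2 [Phi2' [H2 [K2 [a2 [_ [b2 _]]]]]]]].
  destruct (in_eigenspace_split x0 x0_bounds k mu Psi3 E3)
    as [Psi3' [Phi3 [Phi3' [H3 [K3 [a3 [_ [b3 _]]]]]]]].
  (* choose the combination so that Phi and Phi' also vanish at x0 *)
  destruct (C2_three_dependent (Phi1 x0) (Phi2 x0) (Phi3 x0) (Phi1' x0) (Phi2' x0) (Phi3' x0))
    as [c1 [c2 [c3 [Hne [HPhi HPhi']]]]].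
  exists c1, c2, c3; split; auto.
  pose (comb := fun f1 f2 f3 : R -> C => fun x => (1 * (c1 * f1 x + c2 * f2 x) + c3 * f3 x)%C).
  assert (HPsi : Lk_solutionC x0 (IZR k ^ 2) (comb Psi1 Psi2 Psi3) (comb Psi1' Psi2' Psi3') (comb Phi1 Phi2 Phi3))
    by (apply Lk_solutionC_lin; auto; apply Lk_solutionC_lin; auto).
  assert (HPhic : Lk_solutionC x0 (IZR k ^ 2) (comb Phi1 Phi2 Phi3) (comb Phi1' Phi2' Phi3')
                    (fun x => mu * comb Phi1 Phi2 Phi3 x)%C).
  { refine (Lk_solutionC_ext x0 _ x0_bounds _ _ _ _ _ _ _ _ _ (Lk_solutionC_lin x0 _ x0_bounds
      _ _ _ _ _ _ 1 c3 (Lk_solutionC_lin x0 _ x0_bounds _ _ _ _ _ _ c1 c2 K1 K2) K3));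
      intros; unfold comb; ring. }
  intros x Hx; transitivity (comb Psi1 Psi2 Psi3 x); [unfold comb; ring |].
  apply (Lk_solutionC_unique x0 _ x0_bounds mu _ _ _ _ (Rlt_le _ _ k2_gt0) Hmu HPsi HPhic); auto;
    unfold comb; rewrite ?a1, ?a2, ?a3, ?b1, ?b2, ?b3; auto; try ring.
  - rewrite <- HPhi; ring.
  - rewrite <- HPhi'; ring.
Qed.

Lemma eigenvalue_count n (mus : nat -> C) Rb : 0 < Rb ->
  (forall j, (j <= n)%nat -> is_eigenvalue k x0 (mus j) /\ - Re (mus j) <= Rb) ->
  (forall i j, (i <= n)%nat -> (j <= n)%nat -> i <> j -> mus i <> mus j) ->
  INR (S n) <= 2 * x0 * (2 * x0 / (1 - x0 ^ 2)) * Rb.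
Proof.
  intros HRb Hmus Hdist.
  destruct (choice (fun j (q : (R -> R) * (R -> R) * (R -> R) * (R -> R)) => (j <= n)%nat ->
      real_eigenpair x0 (IZR k ^ 2) (Re (mus j)) (fst (fst (fst q))) (snd (fst (fst q)))
        (snd (fst q)) (snd q) /\ exists x1, Iv x0 x1 /\ fst (fst (fst q)) x1 <> 0)) as [q Hq].
  { intros j; destruct (le_dec j n) as [Hj | Hj].
    - destruct (eigenvalue_real_eigenpair (mus j) (proj1 (Hmus j Hj))) as [u [u' [P [P' H]]]].
      exists (u, u', P, P'); auto.
    - exists (fun _ => 0, fun _ => 0, fun _ => 0, fun _ => 0); intros; lia. }
  apply (family_count x0 _ x0_bounds k2_gt0 n (fun j => Re (mus j))
           (fun j => fst (fst (fst (q j)))) (fun j => snd (fst (fst (q j))))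
           (fun j => snd (fst (q j))) (fun j => snd (q j))); auto.
  - intros j Hj; apply (Hq j Hj).
  - intros j Hj; apply (Hq j Hj).
  - intros i j Hi Hj Hij Hre; apply (Hdist i j Hi Hj Hij), C_eq_Re_Im; auto.
    rewrite (proj1 (eigenvalue_real_neg _ (proj1 (Hmus i Hi)))),
            (proj1 (eigenvalue_real_neg _ (proj1 (Hmus j Hj)))); reflexivity.
  - intros j Hj; apply Hmus; auto.
Qed.

End Eigenvalues.

Lemma accumulation_distinct_points (Pr : C -> Prop) mu :
  (forall eps, 0 < eps -> exists nu, Pr nu /\ nu <> mu /\ Cmod (nu - mu) < eps) ->
  forall n, exists f : nat -> C,
    (forall j, (j <= n)%nat -> Pr (f j) /\ Cmod (f j - mu) < 1) /\
    (forall i j, (i <= n)%nat -> (j <= n)%nat -> i <> j -> f i <> f j).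
Proof.
  intros Hacc n.
  assert (Hpos : forall nu, nu <> mu -> 0 < Cmod (nu - mu))
    by (intros nu Hne; apply Cmod_gt_0; intros E; apply Hne; rewrite <- (Cplus_0_l mu), <- E; ring).
  (* keep every point at distance >= d from mu, so that the next one, closer than d, is new *)
  assert (Hd : exists (f : nat -> C) d, 0 < d /\
    (forall j, (j <= n)%nat -> Pr (f j) /\ Cmod (f j - mu) < 1 /\ d <= Cmod (f j - mu)) /\
    (forall i j, (i <= n)%nat -> (j <= n)%nat -> i <> j -> f i <> f j)).
  { induction n as [| n [f [d [Hd [Hf Hdist]]]]].
    - destruct (Hacc 1 Rlt_0_1) as [nu [Hnu [Hne Hlt]]].
      exists (fun _ => nu), (Cmod (nu - mu)); split; [auto | split; [intros; repeat split; auto; lra | lia]].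
    - destruct (Hacc d Hd) as [nu [Hnu [Hne Hlt]]]; destruct (Hf 0%nat ltac:(lia)) as [_ [Hf0 Hd0]].
      exists (fun j => if Nat.eq_dec j (S n) then nu else f j), (Cmod (nu - mu)); split; [auto | split].
      + intros j Hj; destruct (Nat.eq_dec j (S n)) as [-> | Hjn]; [repeat split; auto; lra |].
        destruct (Hf j ltac:(lia)) as [HPr [Hlt1 Hfar]]; repeat split; auto; lra.
      + intros i j Hi Hj Hij; destruct (Nat.eq_dec i (S n)) as [-> | Hin], (Nat.eq_dec j (S n)) as [-> | Hjn].
        * lia.
        * destruct (Hf j ltac:(lia)) as [_ [_ Hfar]]; intros E; rewrite <- E in Hfar; lra.
        * destruct (Hf i ltac:(lia)) as [_ [_ Hfar]]; intros E; rewrite E in Hfar; lra.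
        * apply Hdist; lia. }
  destruct Hd as [f [d [_ [Hf Hdist]]]]; exists f; split; auto.
  intros j Hj; destruct (Hf j Hj) as [HPr [Hlt1 _]]; auto.
Qed.

Lemma eigenvalue_isolated k x0 mu : k <> 0%Z -> 0 < x0 < 1 -> is_eigenvalue k x0 mu ->
  exists eps, 0 < eps /\ forall nu, is_eigenvalue k x0 nu -> nu <> mu -> eps <= Cmod (nu - mu).
Proof.
  intros Hk H0 Hmu; apply NNPP; intros Hno.
  assert (Hacc : forall eps, 0 < eps -> exists nu, is_eigenvalue k x0 nu /\ nu <> mu /\ Cmod (nu - mu) < eps).
  { intros eps Heps; apply NNPP; intros Hn; apply Hno; exists eps; split; auto.
    intros nu Hnu Hne; apply Rnot_lt_le; intros Hlt; apply Hn; exists nu; auto. }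
  destruct (eigenvalue_real_neg k x0 Hk H0 mu Hmu) as [_ Hre].
  set (Rb := 1 - Re mu).
  destruct (INR_unbounded (2 * x0 * (2 * x0 / (1 - x0 ^ 2)) * Rb)) as [n Hn].
  destruct (accumulation_distinct_points _ mu Hacc n) as [mus [Hmus Hdist]].
  assert (Hcount : INR (S n) <= 2 * x0 * (2 * x0 / (1 - x0 ^ 2)) * Rb).
  { apply (eigenvalue_count k x0 Hk H0 n mus Rb ltac:(unfold Rb; lra)); auto.
    intros j Hj; destruct (Hmus j Hj) as [Hev Hlt]; split; auto.
    pose proof (re_le_Cmod (mus j - mu)) as Hre'.
    replace (Re (mus j - mu)) with (Re (mus j) - Re mu) in Hre' by (destruct (mus j), mu; simpl; ring).
    unfold Rb; revert Hre'; unfold Rabs; destruct Rcase_abs; lra. }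
  rewrite S_INR in Hcount; lra.
Qed.

Theorem proposition3 (k : Z) (x0 : R) :
  k <> 0%Z -> 0 < x0 < 1 ->
  forall mu : C, is_eigenvalue k x0 mu ->
    (* isolated *)
    (exists eps : R, 0 < eps /\
       forall nu : C, is_eigenvalue k x0 nu -> nu <> mu -> eps <= Cmod (nu - mu)) /\
    (* real and strictly negative *)
    Im mu = 0 /\ Re mu < 0 /\
    (* simple or double: the eigenspace has (complex) dimension at most 2 *)
    (forall Psi1 Psi2 Psi3 : R -> C,
       in_eigenspace k x0 mu Psi1 ->
       in_eigenspace k x0 mu Psi2 ->
       in_eigenspace k x0 mu Psi3 ->
       exists c1 c2 c3 : C,
         (c1 <> 0%C \/ c2 <> 0%C \/ c3 <> 0%C) /\
         forall x, Iv x0 x -> (c1 * Psi1 x + c2 * Psi2 x + c3 * Psi3 x)%C = 0%C).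
Proof.
  intros Hk H0 mu Hmu.
  destruct (eigenvalue_real_neg k x0 Hk H0 mu Hmu) as [Him Hre].
  split; [apply eigenvalue_isolated; auto |].
  do 2 (split; [assumption |]).
  intros Psi1 Psi2 Psi3; apply (in_eigenspace_dim_le2 k x0 Hk H0 mu); auto.
Qed.
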